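(* Let $z,w>0$ be such that $\mathrm{DAG}(z,w)<\infty$, and let $G$ be a random labelled DAG drawn from the Boltzmann model with parameters $(z,w)$. Let $N_1,N_2,\dots$ be the sizes of the successive layers $V_1,V_2,\dots$ of the root-layering of $G$ (with $N_i=0$ if the root-layering has fewer than $i$ layers). Then for every $k\ge 1$, all positive integers $n_1,\dots,n_k$ for which the conditioning event has positive probability, and every integer $n_{k+1}\ge 0$, \[\mathbb P_{z,w}[N_{k+1}=n_{k+1}\mid N_1=n_1,\dots,N_k=n_k]=\mathbb P_{z,w}[N_2=n_{k+1}\mid N_1=n_k].\] That is, the sequence of layer sizes is a time-homogeneous Markov chain.
   Context: A labelled DAG with $n$ vertices is a directed acyclic graph on vertex set $\{1,\dots,n\}$ ($n\ge0$). For a DAG $G$ write $v(G)$, $e(G)$, $s(G)$ for its numbers of vertices, edges and sources (vertices of in-degree $0$). The graphic generating function of DAGs is $\mathrm{DAG}(z,w,u)=\sum_G \frac{z^{v(G)}w^{e(G)}u^{s(G)}}{(1+w)^{\binom{v(G)}{2}}v(G)!}$, the sum over all labelled DAGs, and $\mathrm{DAG}(z,w)=\mathrm{DAG}(z,w,1)$. The Boltzmann model with parameters $(z,w)$ is the probability distribution $\mathbb P_{z,w}[G]=\frac{z^{v(G)}w^{e(G)}}{(1+w)^{\binom{v(G)}{2}}v(G)!\,\mathrm{DAG}(z,w)}$ on labelled DAGs. The root-layering of a DAG $G=(V,E)$ is the ordered partition $(V_1,\dots,V_k)$ of $V$ where $V_i$ is the set of sources of the graph obtained from $G$ by deleting $V_1\cup\dots\cup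 V_{i-1}$. *)

From HB Require Import structures.
From mathcomp Require Import all_boot all_order all_algebra.
From mathcomp Require Import all_classical all_reals all_analysis.
Set Implicit Arguments. Unset Strict Implicit. Unset Printing Implicit Defensive.
Import Order.TTheory GRing.Theory Num.Theory numFieldNormedType.Exports.
Local Open Scope ring_scope.

(* A labelled digraph on n vertices: vertex set 'I_n (i.e. {0,..,n-1},
   playing the role of {1,..,n}), edge set E; (x,y) \in E is the edge x -> y. *)
Definition edge_rel n (E : {set 'I_n * 'I_n}) : rel 'I_n := fun x y => (x, y) \in E.

Definition isDAG n (E : {set 'I_n * 'I_n}) : bool :=
  [forall x, forall y, ((x, y) \in E) ==> ~~ connect (edge_rel E) y x].

Definition sources_in n (E : {set 'I_n * 'I_n}) (S : {set 'I_n}) : {set 'I_n} :=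
  [set v in S | [forall u in S, (u, v) \notin E]].

Fixpoint remaining n (E : {set 'I_n * 'I_n}) (k : nat) : {set 'I_n} :=
  match k with
  | 0 => [set: 'I_n]%SET
  | k'.+1 => remaining E k' :\: sources_in E (remaining E k')
  end.

(* i-th layer V_i (i >= 1) of the root-layering; empty if fewer than i layers *)
Definition layer n (E : {set 'I_n * 'I_n}) (i : nat) : {set 'I_n} :=
  sources_in E (remaining E i.-1).

Definition layer_size n (E : {set 'I_n * 'I_n}) (i : nat) : nat := #|layer E i|.

Definition bweight (R : realType) (z w : R) n (E : {set 'I_n * 'I_n}) : R :=
  z ^+ n * w ^+ #|E| / ((1 + w) ^+ 'C(n, 2) * (n`!)%:R).

Definition event := forall n, {set 'I_n * 'I_n} -> bool.

Definition mass (R : realType) (z w : R) (P : event) (n : nat) : R :=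
  \sum_(E : {set 'I_n * 'I_n} | isDAG E && P n E) bweight z w E.

Definition DAGgf (R : realType) (z w : R) : R :=
  limn (series (mass z w (fun _ _ => true))).

Definition bprob (R : realType) (z w : R) (P : event) : R :=
  limn (series (mass z w P)) / DAGgf z w.

Definition bcond (R : realType) (z w : R) (A B : event) : R :=
  bprob z w (fun n E => A n E && B n E) / bprob z w B.

From HB Require Import structures.
From mathcomp Require Import all_boot all_order all_algebra.
From mathcomp Require Import all_classical all_reals all_analysis.
From mathcomp Require Import ring zify.
Import Order.TTheory GRing.Theory Num.Theory numFieldNormedType.Exports.
Local Open Scope ring_scope.

(* Weight every source of a DAG by u.  Removing the first layer S, |S| = n1,
   of a DAG on n1 + h vertices leaves a DAG H on h vertices whose root-layering
   is the rest of the layering; conversely the edges from S to the remaining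
   vertices are arbitrary, except that every source of H must receive one.
   Summing over these edges gives
     T_(n1+h)(u; N_1 = n1 and (N_2, N_3, ...) in psi)
       = K(u, n1) * T_h(1 - (1+w)^-n1; (N_1, N_2, ...) in psi),
   where T_n(u; P) is the n-th term of DAG(z, w, u) restricted to P and
   K(u, n1) > 0 is explicit.  Peeling off n_1, ..., n_k thus multiplies by a
   positive constant and leaves the mark 1 - (1+w)^-n_k, which depends on the
   prefix only through n_k; the constant cancels in the conditional probability. *)

Section SubsetSums.
Variables (R : comPzRingType) (w : R).

Lemma prod_set_if (X : finType) (A : {set X}) (c : R) :
  \prod_(x : X) (if x \in A then c else 1) = c ^+ #|A|.
Proof. by rewrite -big_mkcond prodr_const. Qed.

Lemma sum_expr_card_set (X : finType) :
  \sum_(A : {set X}) w ^+ #|A| = (1 + w) ^+ #|X|.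
Proof.
have -> : (1 + w) ^+ #|X| = \prod_(x : X) \sum_(b : bool) (if b then w else 1).
  by rewrite -prodr_const; apply: eq_bigr => x _; rewrite big_bool addrC.
rewrite bigA_distr_bigA (reindex (fun A : {set X} => [ffun x => x \in A])).
  by apply: eq_bigr => A _; rewrite -prod_set_if; apply: eq_bigr => x _; rewrite ffunE.
apply: onW_bij; exists (fun f : {ffun X -> bool} => [set x | f x]) => [A|f].
  by apply/setP => x; rewrite inE ffunE.
by apply/ffunP => x; rewrite ffunE inE.
Qed.

Lemma sum_expr_card_set0 (X : finType) :
  \sum_(A : {set X} | A != finset.set0) w ^+ #|A| = (1 + w) ^+ #|X| - 1.
Proof.
rewrite -sum_expr_card_set [in RHS](bigD1 finset.set0) //=.
by rewrite cards0 expr0 [1 + _]addrC addrK.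
Qed.

(* Sets of pairs are functions from the second coordinate to sets, which turns
   the column-wise covering condition into a product of independent sums. *)
Lemma sum_expr_card_cover (X Y : finType) (Q : pred Y) :
  \sum_(C : {set X * Y} | [forall j, Q j || [exists i, (i, j) \in C]]) w ^+ #|C| =
  \prod_(j : Y) (if Q j then (1 + w) ^+ #|X| else (1 + w) ^+ #|X| - 1).
Proof.
have col j : (if Q j then (1 + w) ^+ #|X| else (1 + w) ^+ #|X| - 1) =
    \sum_(A : {set X} | Q j || (A != finset.set0)) w ^+ #|A|.
  by case: (Q j); rewrite ?sum_expr_card_set ?sum_expr_card_set0.
rewrite (eq_bigr _ (fun j _ => col j)) bigA_distr_big_dep /=.
pose graph (g : {ffun Y -> {set X}}) := [set p : X * Y | p.1 \in g p.2].
rewrite (reindex graph); last first.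
  apply: onW_bij.
  exists (fun C : {set X * Y} => [ffun j => [set i | (i, j) \in C]]) => [g|C].
    by apply/ffunP => j; apply/setP => i; rewrite ffunE !inE.
  by apply/setP => -[i j]; rewrite !inE ffunE inE.
apply: eq_big => g.
  apply/forallP/familyP => h j; move: (h j); rewrite unfold_in /=.
    by case: (Q j) => //= /existsP [i]; rewrite inE => gi; apply/set0Pn; exists i.
  by case: (Q j) => //= /set0Pn [i gi]; apply/existsP; exists i; rewrite inE.
move=> _; rewrite -prod_set_if.
under eq_bigr => p _ do rewrite inE.
rewrite -(pair_bigA _ (fun i j => if i \in g j then w else 1)) exchange_big /=.
by apply: eq_bigr => j _; rewrite prod_set_if.
Qed.

End SubsetSums.

Notation sources E := (sources_in E [set: _]%SET).

Lemma in_sources n (E : {set 'I_n * 'I_n}) v :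
  (v \in sources E) = [forall u, (u, v) \notin E].
Proof. by rewrite !inE; apply: eq_forallb => u; rewrite inE. Qed.

Lemma remainingS n (E : {set 'I_n * 'I_n}) k :
  remaining E k.+1 = remaining E k :\: sources_in E (remaining E k).
Proof. by []. Qed.

Lemma imsetD_inj (aT rT : finType) (f : aT -> rT) (A B : {set aT}) :
  injective f -> f @: (A :\: B) = f @: A :\: f @: B.
Proof.
move=> f_inj; apply/setP => y; rewrite inE.
apply/imsetP/andP => [[x /setDP [xA xB] ->]|[yB /imsetP [x xA y_def]]].
  by rewrite !mem_imset.
subst y; exists x; rewrite // inE xA andbT; move: yB; apply: contra; exact: imset_f.
Qed.

Section ConnectImage.
Context {T T' : finType} {e : rel T} {e' : rel T'} {f : T' -> T}.
Hypothesis e_mono : forall x y, e (f x) (f y) = e' x y.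

Lemma connect_image x y : connect e' x y -> connect e (f x) (f y).
Proof.
move=> /connectP [p + ->]; elim: p x => [|y1 p IHp] x /=; first by rewrite connect0.
by case/andP=> exy1 /IHp; apply: connect_trans; apply: connect1; rewrite e_mono.
Qed.

Hypothesis image_closed : forall x v, e (f x) v -> exists y, v = f y.

Lemma connect_from_image x v :
  connect e (f x) v -> exists2 y, v = f y & connect e' x y.
Proof.
move=> /connectP [p]; elim: p x => [|v1 p IHp] x /=; first by move=> _ ->; exists x.
case/andP=> exv1 p_path v_last; have [y1 v1_def] := image_closed _ _ exv1; subst v1.
have [y -> y1y] := IHp y1 p_path v_last; exists y => //.
by apply: connect_trans (connect1 _) y1y; rewrite -e_mono.
Qed.

End ConnectImage.

(* The edges from n removed sources into a vertex that has no other in-edge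
   weigh (1 + w)^n - 1 = (1 + w)^n * next_mark w n in total: the mark of the
   sources of the remaining graph. *)
Definition next_mark {R : fieldType} (w : R) (n : nat) : R := 1 - (1 + w) ^- n.

Section SourceSplit.
Variables (n a b : nat) (S : {set 'I_n}) (sv : 'I_a -> 'I_n) (rv : 'I_b -> 'I_n).
Hypotheses (sv_inj : injective sv) (rv_inj : injective rv).
Hypotheses (sv_in : forall i, sv i \in S) (rv_notin : forall j, rv j \notin S).
Hypotheses (sv_onto : forall v, v \in S -> exists i, v = sv i)
  (rv_onto : forall v, v \notin S -> exists j, v = rv j).
Implicit Types (E : {set 'I_n * 'I_n}) (H : {set 'I_b * 'I_b}) (C : {set 'I_a * 'I_b}).

Lemma sv_neq_rv i j : sv i != rv j.
Proof. by apply: contraNneq (rv_notin j) => <-. Qed.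

Lemma sv_or_rv v : (exists i, v = sv i) \/ (exists j, v = rv j).
Proof.
by case: (boolP (v \in S)) => vS; [left; apply: sv_onto | right; apply: rv_onto].
Qed.

Definition rest_graph E : {set 'I_b * 'I_b} := [set p | (rv p.1, rv p.2) \in E].
Definition cross_edges E : {set 'I_a * 'I_b} := [set p | (sv p.1, rv p.2) \in E].
Definition glue H C : {set 'I_n * 'I_n} :=
  [set (rv p.1, rv p.2) | p in H] :|: [set (sv p.1, rv p.2) | p in C].

Lemma in_glue_rv H C x y : ((rv x, rv y) \in glue H C) = ((x, y) \in H).
Proof.
rewrite inE; apply/orP/idP => [[]|xyH]; last by left; apply/imsetP; exists (x, y).
  by case/imsetP => -[x' y'] x'y'H [/rv_inj -> /rv_inj ->].
by case/imsetP => -[i y'] _ [rvsv _]; move: (sv_neq_rv i x); rewrite rvsv eqxx.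
Qed.

Lemma in_glue_sv H C i y : ((sv i, rv y) \in glue H C) = ((i, y) \in C).
Proof.
rewrite inE; apply/orP/idP => [[]|iyC]; last by right; apply/imsetP; exists (i, y).
  by case/imsetP => -[x y'] _ [svrv _]; move: (sv_neq_rv i x); rewrite svrv eqxx.
by case/imsetP => -[i' y'] i'y'C [/sv_inj -> /rv_inj ->].
Qed.

Lemma in_glue_to_sv H C v i : ((v, sv i) \in glue H C) = false.
Proof.
apply/negbTE; rewrite inE negb_or; apply/andP.
by split; apply/imsetP => -[[x y] _ [_ svrv]]; move: (sv_neq_rv i y); rewrite svrv eqxx.
Qed.

Lemma rest_graph_glue H C : rest_graph (glue H C) = H.
Proof. by apply/setP => -[x y]; rewrite inE in_glue_rv. Qed.

Lemma cross_edges_glue H C : cross_edges (glue H C) = C.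
Proof. by apply/setP => -[i y]; rewrite inE in_glue_sv. Qed.

Lemma glue_split E :
  (forall v i, (v, sv i) \notin E) -> glue (rest_graph E) (cross_edges E) = E.
Proof.
move=> Esv; apply/setP => -[u v].
have [[i ->]|[j ->]] := sv_or_rv v; first by rewrite in_glue_to_sv (negbTE (Esv _ _)).
by have [[i ->]|[j' ->]] := sv_or_rv u; rewrite ?in_glue_sv ?in_glue_rv inE.
Qed.

Lemma card_glue H C : #|glue H C| = (#|H| + #|C|)%N.
Proof.
rewrite cardsU !card_imset => [|[i y] [i' y'] /= [/sv_inj -> /rv_inj ->]|
  [x y] [x' y'] /= [/rv_inj -> /rv_inj ->]] //.
rewrite -[RHS]subn0; congr (_ - _)%N; apply/eqP; rewrite cards_eq0; apply/eqP/setP => p.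
rewrite !inE; apply/negbTE/andP => -[/imsetP [[x y] _ ->] /imsetP [[i y'] _ [rvsv _]]].
by move: (sv_neq_rv i x); rewrite rvsv eqxx.
Qed.

Lemma sources_eq_split E : (sources E == S) =
  [forall i, forall v, (v, sv i) \notin E] && [forall j, exists v, (v, rv j) \in E].
Proof.
apply/eqP/andP => [srcE|[/forallP svE /forallP rvE]].
  split; apply/forallP; first by move=> i; have := sv_in i; rewrite -srcE in_sources.
  move=> j; have := rv_notin j; rewrite -srcE in_sources negb_forall => /existsP [v].
  by rewrite negbK => vE; apply/existsP; exists v.
apply/setP => v; rewrite in_sources.
have [[i ->]|[j ->]] := sv_or_rv v; first by rewrite sv_in; exact: svE.
rewrite (negbTE (rv_notin j)); apply/negbTE; rewrite negb_forall.
by case/existsP: (rvE j) => u uE; apply/existsP; exists u; rewrite negbK.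
Qed.

Definition covered H C :=
  [forall j, [exists j', (j', j) \in H] || [exists i, (i, j) \in C]].

Lemma sources_glue H C : (sources (glue H C) == S) = covered H C.
Proof.
rewrite sources_eq_split.
have -> : [forall i, forall v, (v, sv i) \notin glue H C].
  by apply/forallP => i; apply/forallP => v; rewrite in_glue_to_sv.
apply: eq_forallb => j; apply/existsP/orP => [[v]|[/existsP [j' j'jH]|/existsP [i ijC]]].
- have [[i ->]|[j' ->]] := sv_or_rv v; rewrite ?in_glue_sv ?in_glue_rv => vj;
    [right|left]; apply/existsP; eexists; exact: vj.
- by exists (rv j'); rewrite in_glue_rv.
- by exists (sv i); rewrite in_glue_sv.
Qed.

(* The glued graph has no edge into a source vertex, so every path starting in
   the rest stays there. *)
Lemma isDAG_glue H C : isDAG (glue H C) = isDAG H.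
Proof.
set e := edge_rel (glue H C).
have e_mono x y : e (rv x) (rv y) = edge_rel H x y by rewrite /e /edge_rel in_glue_rv.
have rv_closed x v : e (rv x) v -> exists y, v = rv y.
  by have [[i ->]|[j ->]] := sv_or_rv v; [rewrite /e /edge_rel in_glue_to_sv | exists j].
have connect_rv x y : connect e (rv x) (rv y) = connect (edge_rel H) x y.
  apply/idP/idP; last exact: (connect_image (f := rv) e_mono).
  by case/(connect_from_image (f := rv) e_mono rv_closed) => y' /rv_inj ->.
have connect_sv x i : connect e (rv x) (sv i) = false.
  apply/negbTE/negP; case/(connect_from_image (f := rv) e_mono rv_closed) => y' svrv _.
  by move: (sv_neq_rv i y'); rewrite svrv eqxx.
apply/forallP/forallP => acyclic x.
  apply/forallP => y; apply/implyP => xyH.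
  by have := implyP (forallP (acyclic (rv x)) (rv y)); rewrite in_glue_rv connect_rv; apply.
apply/forallP => v; apply/implyP.
have [[i ->]|[j ->]] := sv_or_rv v; first by rewrite in_glue_to_sv.
have [[i ->]|[j' ->]] := sv_or_rv x; first by rewrite connect_sv.
by rewrite in_glue_rv connect_rv => j'jH; exact: (implyP (forallP (acyclic j') j) j'jH).
Qed.

Lemma sources_in_rv E (X : {set 'I_b}) :
  sources_in E (rv @: X) = rv @: sources_in (rest_graph E) X.
Proof.
have sv_notin_rv i (Y : {set 'I_b}) : (sv i \in rv @: Y) = false.
  by apply/negbTE/imsetP => -[j _ svrv]; move: (sv_neq_rv i j); rewrite svrv eqxx.
apply/setP => v; have [[i ->]|[j ->]] := sv_or_rv v; first by rewrite !inE !sv_notin_rv.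
rewrite mem_imset // !inE mem_imset //; congr (_ && _).
apply/forallP/forallP => srcj u.
  by apply/implyP => uX; have := implyP (srcj (rv u)); rewrite mem_imset // inE; apply.
by apply/implyP => /imsetP [u' u'X ->]; have := implyP (srcj u'); rewrite inE; exact.
Qed.

Lemma remaining_split E : sources E = S ->
  forall i, remaining E i.+1 = rv @: remaining (rest_graph E) i.
Proof.
move=> srcE; elim=> [|i IHi]; last by rewrite [LHS]remainingS IHi sources_in_rv -imsetD_inj.
rewrite remainingS srcE; apply/setP => v; have [[i ->]|[j ->]] := sv_or_rv v.
  rewrite !inE sv_in; apply/esym/negbTE/imsetP => -[j _ svrv].
  by move: (sv_neq_rv i j); rewrite svrv eqxx.
by rewrite inE (negbTE (rv_notin j)) mem_imset // !inE.
Qed.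

Lemma layer_size_split E : sources E = S ->
  forall i, layer_size E i.+2 = layer_size (rest_graph E) i.+1.
Proof.
move=> srcE i; rewrite /layer_size /layer remaining_split //.
by rewrite sources_in_rv card_imset.
Qed.

Lemma sum_covered (R : fieldType) (w : R) H : 1 + w != 0 ->
  \sum_(C | covered H C) w ^+ #|C| = (1 + w) ^+ (a * b) * next_mark w a ^+ #|sources H|.
Proof.
move=> w1_neq0; rewrite /covered sum_expr_card_cover card_ord.
have factor j : (if [exists j', (j', j) \in H] then (1 + w) ^+ a else (1 + w) ^+ a - 1)
    = (1 + w) ^+ a * (if j \in sources H then next_mark w a else 1).
  rewrite in_sources -negb_exists; case: [exists _, _] => /=; first by rewrite mulr1.
  by rewrite /next_mark mulrBr mulr1 mulfV // expf_neq0.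
rewrite (eq_bigr _ (fun j _ => factor j)) big_split /= prod_set_if prodr_const.
by rewrite card_ord -exprM.
Qed.

Lemma sum_split_sources (R : fieldType) (w : R) (psi : (nat -> nat) -> bool) :
  1 + w != 0 ->
  \sum_(E : {set 'I_n * 'I_n} | isDAG E && (sources E == S)
                                && psi (fun i => layer_size E i.+2)) w ^+ #|E|
  = (1 + w) ^+ (a * b) *
    \sum_(H : {set 'I_b * 'I_b} | isDAG H && psi (fun i => layer_size H i.+1))
      w ^+ #|H| * next_mark w a ^+ #|sources H|.
Proof.
move=> w1_neq0.
transitivity (\sum_(E : {set 'I_n * 'I_n} | isDAG E && (sources E == S)
                        && psi (fun i => layer_size (rest_graph E) i.+1)) w ^+ #|E|).
  apply: eq_bigl => E; case srcE: (sources E == S); rewrite ?andbF ?andFb // !andbT.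
  by congr (_ && psi _); apply: funext => i; rewrite layer_size_split //; apply/eqP.
rewrite (reindex_onto (fun HC => glue HC.1 HC.2)
                      (fun E => (rest_graph E, cross_edges E))) /=; last first.
  move=> E /andP [/andP [_]]; rewrite sources_eq_split => /andP [/forallP svE _] _.
  by apply: glue_split => v i; exact: (forallP (svE i) v).
transitivity (\sum_(H : {set 'I_b * 'I_b} | isDAG H && psi (fun i => layer_size H i.+1))
                \sum_(C | covered H C) w ^+ #|H| * w ^+ #|C|); last first.
  by rewrite mulr_sumr; apply: eq_bigr => H _; rewrite -mulr_sumr sum_covered // mulrCA.
rewrite pair_big_dep; apply: eq_big => -[H C] /=.
  by rewrite rest_graph_glue cross_edges_glue eqxx andbT isDAG_glue sources_glue andbAC.
by move=> _; rewrite card_glue exprD.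
Qed.

End SourceSplit.

Lemma sum_split_sources_set (R : fieldType) (w : R) n (S : {set 'I_n})
    (psi : (nat -> nat) -> bool) : 1 + w != 0 ->
  \sum_(E : {set 'I_n * 'I_n} | isDAG E && (sources E == S)
                                && psi (fun i => layer_size E i.+2)) w ^+ #|E|
  = (1 + w) ^+ (#|S| * #|~: S|) *
    \sum_(H : {set 'I_#|~: S| * 'I_#|~: S|} | isDAG H && psi (fun i => layer_size H i.+1))
      w ^+ #|H| * next_mark w #|S| ^+ #|sources H|.
Proof.
apply: (@sum_split_sources n _ _ S (@enum_val _ (mem S)) (@enum_val _ (mem (~: S)))).
- exact: enum_val_inj.
- exact: enum_val_inj.
- exact: enum_valP.
- by move=> j; have := enum_valP j; rewrite inE.
- by move=> v vS; exists (enum_rank_in vS v); rewrite enum_rankK_in.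
- move=> v; rewrite -finset.in_setC => vS.
  by exists (enum_rank_in vS v); rewrite enum_rankK_in.
Qed.

Lemma sum_first_layer (R : fieldType) (w u : R) n1 h (psi : (nat -> nat) -> bool) :
  1 + w != 0 ->
  \sum_(E : {set 'I_(n1 + h) * 'I_(n1 + h)} | isDAG E && ((layer_size E 1 == n1)
                                      && psi (fun i => layer_size E i.+2)))
     w ^+ #|E| * u ^+ #|sources E|
  = 'C(n1 + h, n1)%:R * u ^+ n1 * (1 + w) ^+ (n1 * h) *
    \sum_(H : {set 'I_h * 'I_h} | isDAG H && psi (fun i => layer_size H i.+1))
      w ^+ #|H| * next_mark w n1 ^+ #|sources H|.
Proof.
move=> w1_neq0.
rewrite (partition_big (fun E => sources E) (fun S => #|S| == n1)); last first.
  by move=> E /andP [_ /andP []].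
have block (S : {set 'I_(n1 + h)}) : #|S| = n1 ->
    \sum_(E | isDAG E && ((layer_size E 1 == n1) && psi (fun i => layer_size E i.+2))
              && (sources E == S)) w ^+ #|E| * u ^+ #|sources E|
    = u ^+ n1 * (1 + w) ^+ (n1 * h) *
      \sum_(H : {set 'I_h * 'I_h} | isDAG H && psi (fun i => layer_size H i.+1))
        w ^+ #|H| * next_mark w n1 ^+ #|sources H|.
  move=> cardS.
  rewrite (eq_bigl (fun E => isDAG E && (sources E == S)
                             && psi (fun i => layer_size E i.+2))); last first.
    move=> E; case: (sources E =P S) => [srcE|_]; rewrite ?andbF ?andbT //.
    by rewrite /layer_size /layer /= srcE cardS eqxx.
  rewrite (eq_bigr (fun E : {set 'I_(n1 + h) * 'I_(n1 + h)} => u ^+ n1 * w ^+ #|E|));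
    last first.
    by move=> E /andP [/andP [_ /eqP ->] _]; rewrite cardS mulrC.
  have cardSC : #|~: S| = h.
    by apply/eqP; rewrite -(eqn_add2l n1) -{1}cardS cardsC card_ord.
  by rewrite -mulr_sumr sum_split_sources_set // cardSC cardS mulrA.
rewrite (eq_bigr _ (fun S cardS => block S (eqP cardS))).
rewrite (eq_bigl (fun S => S \in [set S : {set 'I_(n1 + h)} | #|S| == n1]));
  last by move=> S; rewrite inE.
by rewrite sumr_const card_draws card_ord -mulr_natl; ring.
Qed.

Definition umass {R : realType} (z w u : R) (P : event) (n : nat) : R :=
  \sum_(E : {set 'I_n * 'I_n} | isDAG E && P n E) bweight z w E * u ^+ #|sources E|.

(* The argument [s] of [psi] is the layer-size sequence shifted by one:
   [s i] is N_(i+1). *)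
Definition layer_event (psi : (nat -> nat) -> bool) : event :=
  fun n E => psi (fun i => layer_size E i.+1).

Definition layer_weight {R : realType} (z w u : R) (n1 : nat) : R :=
  z ^+ n1 * u ^+ n1 / ((1 + w) ^+ 'C(n1, 2) * n1`!%:R).

Lemma mass_umass1 (R : realType) (z w : R) (P : event) : mass z w P = umass z w 1 P.
Proof. by apply: funext => n; apply: eq_bigr => E _; rewrite expr1n mulr1. Qed.

Lemma umassE (R : realType) (z w u : R) (P : event) n :
  umass z w u P n = z ^+ n / ((1 + w) ^+ 'C(n, 2) * n`!%:R) *
    \sum_(E : {set 'I_n * 'I_n} | isDAG E && P n E) w ^+ #|E| * u ^+ #|sources E|.
Proof. by rewrite mulr_sumr; apply: eq_bigr => E _; rewrite /bweight; ring. Qed.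

Lemma bin2D m k : 'C(m + k, 2) = ('C(m, 2) + 'C(k, 2) + m * k)%N.
Proof.
elim: k => [|k IHk]; first by rewrite bin0n muln0 !addn0.
by rewrite addnS !binS !bin1 IHk mulnS; lia.
Qed.

Lemma umass_first_layer (R : realType) (z w u : R) n1 h (psi : (nat -> nat) -> bool) :
  0 <= w ->
  umass z w u (layer_event (fun s => (s 0%N == n1) && psi (fun i => s i.+1))) (n1 + h) =
  layer_weight z w u n1 * umass z w (next_mark w n1) (layer_event psi) h.
Proof.
move=> w_ge0; have w1_neq0 : 1 + w != 0 by rewrite lt0r_neq0 // ltr_pwDl.
rewrite !umassE sum_first_layer //.
have := bin_fact (leq_addr h n1); rewrite addKn => fact_split.
have fact_neq0 k : k`!%:R != 0 :> R by rewrite pnatr_eq0 -lt0n fact_gt0.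
have bin_neq0 : 'C(n1 + h, n1)%:R != 0 :> R by rewrite pnatr_eq0 -lt0n bin_gt0 leq_addr.
rewrite /layer_weight -fact_split bin2D !exprD !natrM; field.
by rewrite !fact_neq0 bin_neq0 !expf_neq0.
Qed.

Lemma lim_series_shift (R : realType) (a b : R ^nat) n0 K :
  (forall n, (n < n0)%N -> a n = 0) -> (forall h, a (n0 + h)%N = K * b h) ->
  cvgn (series b) -> limn (series a) = K * limn (series b).
Proof.
move=> a_small a_shift b_cvg.
have series_small m : (m <= n0)%N -> series a m = 0.
  elim: m => [|m IHm] m_le; first by rewrite /series /= big_geq.
  by rewrite seriesSr IHm ?a_small ?addr0 // ltnW.
have series_shift N : series a (N + n0)%N = K * series b N.
  elim: N => [|N IHN]; first by rewrite add0n series_small // /series /= big_geq // mulr0.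
  by rewrite addSn !seriesSr IHN addnC a_shift mulrDr.
suff: (series a @ \oo --> K * limn (series b))%classic by move/cvg_lim => ->.
rewrite -(cvg_shiftn n0) (funext series_shift); exact: cvgMl_tmp.
Qed.

Section Bounds.
Context {R : realType} (z w : R).

Lemma bweight_ge0 n (E : {set 'I_n * 'I_n}) : 0 <= z -> 0 <= w -> 0 <= bweight z w E.
Proof.
move=> z_ge0 w_ge0.
by rewrite divr_ge0 ?mulr_ge0 ?exprn_ge0 ?ler0n ?addr_ge0.
Qed.

Lemma umass_le_mass u P n : 0 <= z -> 0 <= w -> 0 <= u <= 1 ->
  0 <= umass z w u P n <= mass z w (fun _ _ => true) n.
Proof.
move=> z_ge0 w_ge0 /andP [u_ge0 u_le1]; apply/andP; split.
  by apply: sumr_ge0 => E _; rewrite mulr_ge0 ?exprn_ge0 ?bweight_ge0.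
rewrite /umass /mass big_mkcondr [X in _ <= X]big_mkcondr /=.
apply: ler_sum => E _; case: (P n E); last exact: bweight_ge0.
by rewrite ler_piMr ?bweight_ge0 // exprn_ile1.
Qed.

Lemma is_cvg_umass u P : 0 <= z -> 0 <= w -> 0 <= u <= 1 ->
  cvgn (series (mass z w (fun _ _ => true))) -> cvgn (series (umass z w u P)).
Proof.
move=> z_ge0 w_ge0 u01; apply: series_le_cvg => n.
- by have /andP [] := umass_le_mass u P n z_ge0 w_ge0 u01.
- by apply: sumr_ge0 => E _; exact: bweight_ge0.
- by have /andP [] := umass_le_mass u P n z_ge0 w_ge0 u01.
Qed.

Lemma next_mark_ge0_le1 n1 : 0 <= w -> 0 <= next_mark w n1 <= 1.
Proof.
move=> w_ge0; have w1n_ge1 : 1 <= (1 + w) ^+ n1 by rewrite exprn_ege1 // lerDl.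
have w1n_gt0 : 0 < (1 + w) ^+ n1 by apply: lt_le_trans w1n_ge1.
rewrite /next_mark subr_ge0 invf_le1 // w1n_ge1 /=.
by rewrite lerBlDr lerDl invr_ge0 ltW.
Qed.

Lemma next_mark_gt0 n1 : 0 < w -> (0 < n1)%N -> 0 < next_mark w n1.
Proof.
move=> w_gt0 n1_gt0; have w1n_gt1 : 1 < (1 + w) ^+ n1 by rewrite exprn_egt1 ?ltrDl -?lt0n.
have w1n_gt0 : 0 < (1 + w) ^+ n1 by apply: lt_trans w1n_gt1.
by rewrite /next_mark subr_gt0 invf_lt1.
Qed.

Lemma layer_weight_gt0 u n1 : 0 < z -> 0 <= w -> 0 < u -> 0 < layer_weight z w u n1.
Proof.
move=> z_gt0 w_ge0 u_gt0.
by rewrite divr_gt0 ?mulr_gt0 ?exprn_gt0 ?ltr0n ?fact_gt0 ?ltr_pwDl.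
Qed.

End Bounds.

Fixpoint prefixed (l : seq nat) (psi : (nat -> nat) -> bool) (s : nat -> nat) : bool :=
  if l is n1 :: l' then (s 0%N == n1) && prefixed l' psi (fun i => s i.+1) else psi s.

Fixpoint prefix_weight {R : realType} (z w u : R) (l : seq nat) : R :=
  if l is n1 :: l' then layer_weight z w u n1 * prefix_weight z w (next_mark w n1) l'
  else 1.

Definition last_mark {R : fieldType} (w u : R) (l : seq nat) : R :=
  foldl (fun _ n1 => next_mark w n1) u l.

Lemma forall_ordS k (P : pred nat) :
  [forall i : 'I_k.+1, P i] = P 0%N && [forall i : 'I_k, P i.+1].
Proof.
apply/forallP/andP => [P_all|[P0 /forallP P_all] [[|i] i_lt]] //.
  by split; [exact: (P_all ord0) | apply/forallP => i; exact: (P_all (lift ord0 i))].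
exact: (P_all (Ordinal (i_lt : (i < k)%N))).
Qed.

Lemma prefixed_mkseq k (f : nat -> nat) psi s :
  prefixed (mkseq f k) psi s = [forall i : 'I_k, s i == f i] && psi (fun i => s (i + k)%N).
Proof.
elim: k f s => [|k IHk] f s.
  have -> : [forall i : 'I_0, s i == f i] by apply/forallP => -[].
  by congr psi; apply: funext => i; rewrite addn0.
have -> : mkseq f k.+1 = f 0%N :: mkseq (fun i => f i.+1) k.
  by rewrite /mkseq /= (iotaDl 1 0) -map_comp.
rewrite /= IHk (forall_ordS k (fun i => s i == f i)) andbA; congr (_ && psi _).
by apply: funext => i; rewrite addnS.
Qed.

Section Prefixes.
Context {R : realType} (z w : R).
Hypotheses (z_gt0 : 0 < z) (w_gt0 : 0 < w).
Hypothesis mass_cvg : cvgn (series (mass z w (fun _ _ => true))).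

Lemma lim_umass_prefixed l psi u : 0 <= u <= 1 ->
  limn (series (umass z w u (layer_event (prefixed l psi)))) =
  prefix_weight z w u l * limn (series (umass z w (last_mark w u l) (layer_event psi))).
Proof.
have [z_ge0 w_ge0] := (ltW z_gt0, ltW w_gt0).
elim: l u => [|n1 l IHl] u u01 /=; first by rewrite mul1r.
have mark01 := next_mark_ge0_le1 w n1 w_ge0.
rewrite (@lim_series_shift _ _ (umass z w (next_mark w n1) (layer_event (prefixed l psi)))
           n1 (layer_weight z w u n1)).
- by rewrite IHl // mulrA.
- move=> n n_lt; rewrite /umass big_pred0 // => E.
  apply/negbTE/andP => -[_ /andP [/eqP E1 _]].
  by have := max_card (mem (layer E 1)); rewrite card_ord -/(layer_size E 1) E1 leqNgt n_lt.
- by move=> h; exact: umass_first_layer.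
- exact: is_cvg_umass.
Qed.

Lemma prefix_weight_gt0 l u : all (leq 1) l -> 0 < u -> 0 < prefix_weight z w u l.
Proof.
elim: l u => [|n1 l IHl] u //= /andP [n1_gt0 l_pos] u_gt0.
by rewrite mulr_gt0 ?layer_weight_gt0 ?ltW // IHl // next_mark_gt0.
Qed.

Lemma bcond_prefixed (A B : event) l psi : all (leq 1) l ->
  (forall n E, A n E && B n E = layer_event (prefixed l psi) n E) ->
  (forall n E, B n E = layer_event (prefixed l xpredT) n E) ->
  let u := last_mark w 1 l in
  bcond z w A B = (limn (series (umass z w u (layer_event psi))) / DAGgf z w) /
                  (limn (series (umass z w u (layer_event xpredT))) / DAGgf z w).
Proof.
move=> l_pos AB_eq B_eq u.
have mass_prefixed (P : event) phi :
    (forall n E, P n E = layer_event (prefixed l phi) n E) ->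
    mass z w P = umass z w 1 (layer_event (prefixed l phi)).
  move=> P_eq; rewrite mass_umass1; apply: funext => n.
  by apply: eq_bigl => E; rewrite P_eq.
rewrite /bcond /bprob (mass_prefixed _ _ AB_eq) (mass_prefixed _ _ B_eq).
rewrite !lim_umass_prefixed ?ler01 ?lexx //.
set K := prefix_weight z w 1 l.
have K_neq0 : K != 0 by rewrite lt0r_neq0 ?prefix_weight_gt0.
set X := limn _; set Y := limn _.
by rewrite -(mulrA K X) -(mulrA K Y) invfM mulrACA mulfV // mul1r.
Qed.

End Prefixes.

Theorem lemma1 (R : realType) (z w : R) (hz : 0 < z) (hw : 0 < w)
  (hfin : cvgn (series (mass z w (fun _ _ => true))))
  (k : nat) (hk : (1 <= k)%N) (ns : nat -> nat)
  (hpos : forall i, (1 <= i <= k)%N -> (0 < ns i)%N)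
  (hcond : 0 < bprob z w (fun n E => [forall i : 'I_k, layer_size E i.+1 == ns i.+1]))
  (m : nat) :
  bcond z w (fun n E => layer_size E k.+1 == m)
            (fun n E => [forall i : 'I_k, layer_size E i.+1 == ns i.+1])
  = bcond z w (fun n E => layer_size E 2 == m) (fun n E => layer_size E 1 == ns k).
Proof.
set l := mkseq (fun i => ns i.+1) k.
have l_pos : all (leq 1) l.
  by apply/allP => j /mapP [i]; rewrite mem_iota => /andP [_ i_lt] ->; apply: hpos.
rewrite (@bcond_prefixed _ z w hz hw hfin _ _ l (fun s => s 0%N == m) l_pos); first last.
- by move=> n E; rewrite /layer_event prefixed_mkseq andbT.
- by move=> n E; rewrite /layer_event prefixed_mkseq add0n andbC.
rewrite (@bcond_prefixed _ z w hz hw hfin _ _ [:: ns k] (fun s => s 0%N == m)); first last.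
- by move=> n E; rewrite /layer_event /= andbT.
- by move=> n E; rewrite andbC.
- by rewrite /= andbT hpos ?hk ?leqnn.
suff -> : last_mark w 1 l = next_mark w (ns k) by [].
by rewrite /l -(prednK hk) mkseqS /last_mark foldl_rcons.
Qed.
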